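(* Let $m=2k+1$ with $k$ a nonnegative integer. For $h\in(0,+\infty)$ let $u=u(h)$, $J_{i,j}=J_{i,j}(h)$ and $I_{i,j}=I_{i,j}(h)$ be as in the context. Then: (i) For all integers $i,l,s\ge 0$: $J_{i,2s}=-I_{i,2s}$, $J_{2l,2s+1}=I_{2l,2s+1}$, $J_{2l+1,2s+1}=-I_{2l+1,2s+1}$. (ii) For every integer $l\ge 1$ there are constants $\tau^{i}_{l,d}$, $\mu^{i}_{l,d}$ such that for $0\le d\le l$ $$J_{2l-2d,2d}=\tau_{l,d}^{0}h^{l}J_{0,0}+\sum_{i=1}^{d}\tau_{l,d}^{i}h^{i-1}u^{2l+2d(m-1)+1-2m(i-1)}+\sum_{i=1}^{l-d}\tau_{l,d}^{i+d}h^{l-i}u^{2m+1+2(i-1)},$$ and for $0\le d\le l-1$ $$J_{2l-2d-1,2d+1}=\mu_{l,d}^{0}h^{l-1}J_{1,1}+\sum_{i=1}^{d}\mu_{l,d}^{i}h^{i-1}u^{2l+2d(m-1)+m-2m(i-1)}+\sum_{i=2}^{l-d}\mu_{l,d}^{i+d}h^{l-i}u^{3m+2+2(i-2)}.$$ (iii) For every integer $l\ge 0$ there are constants $\chi_{l,d}$ such that for $0\le d\le l$: $J_{2l+1-2d,2d}=0$ and $J_{2l-2d,2d+1}=\chi_{l,d}h^{l}J_{0,1}$.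
   Context: For $h>0$ let $u=u(h)>0$ be the unique positive number with $u^2+u^{2m}=h$; the circle $x^2+y^2=h$ meets the curve $y=x^m$ at $A=(-u,(-u)^m)$ and $B=(u,u^m)$. $L_h^{+}$ is the arc of this circle in $\{y\ge x^m\}$ traversed clockwise from $A$ to $B$, and $L_h^-$ the arc in $\{y\le x^m\}$ traversed clockwise from $B$ to $A$. For nonnegative integers $i,j$, $J_{i,j}(h)=\int_{L_h^+}x^iy^jdx$ and $I_{i,j}(h)=\int_{L_h^-}x^iy^jdx$. The constants $\tau,\mu,\chi$ depend only on the indices (and $m$), not on $h$. *)

From Stdlib Require Import Reals List.
From Coquelicot Require Import Coquelicot.
Open Scope R_scope.

(* Finite sum  sum_{i=a}^{b} f i  (empty, i.e. 0, when b < a). *)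
Definition sumR (f : nat -> R) (a b : nat) : R :=
  fold_right Rplus 0 (map f (seq a (S b - a))).

Definition line_int_dx (P : R -> R -> R) (gx gy : R -> R) (a b : R) : R :=
  RInt (fun t => P (gx t) (gy t) * Derive gx t) a b.

Definition circ_x (h t : R) : R := sqrt h * cos t.
Definition circ_y (h t : R) : R := sqrt h * sin t.

(* Polar angles of B = (u, u^m) and A = (-u, (-u)^m) (u > 0). *)
Definition angB (m : nat) (u : R) : R := atan (u ^ m / u).
Definition angA (m : nat) (u : R) : R := PI + atan ((- u) ^ m / (- u)).

(* L_h^+ : arc from A clockwise (decreasing angle) to B, through the top
   point (0, sqrt h), i.e. the arc lying in {y >= x^m}.
   L_h^- : arc from B clockwise to A, through (0, -sqrt h), i.e. the arc
   lying in {y <= x^m}. *)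
Definition Jij (m : nat) (h u : R) (i j : nat) : R :=
  line_int_dx (fun x y => x ^ i * y ^ j) (circ_x h) (circ_y h)
    (angA m u) (angB m u).

Definition Iij (m : nat) (h u : R) (i j : nat) : R :=
  line_int_dx (fun x y => x ^ i * y ^ j) (circ_x h) (circ_y h)
    (angB m u) (angA m u - 2 * PI).

From Stdlib Require Import Reals List Lia Lra IndefiniteDescription.
From Coquelicot Require Import Coquelicot.
Open Scope R_scope.

(* For odd [m], [L_h^+] is [t |-> sqrt h (cos t, sin t)] with [t] running from [PI + b] down to
   [b], where [sqrt h cos b = u] and [sqrt h sin b = u ^ m], and [L_h^-] is its translate by
   [-PI]. Hence [J_{p,q} = - sqrt h ^ (p+q+1) * \int_{PI+b}^{b} cos^p sin^(q+1)], and the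
   translation gives [I_{p,q} = (-1)^(p+q+1) J_{p,q}]; with [J_{odd,even} = 0] this is (i).
   When [p + q + 1] is even the integrand is [PI]-periodic, so [J_{p,q}] does not depend on [b],
   which gives (iii). For (ii), the reduction [cos^2 + sin^2 = 1] writes [J_{2n,2d}] as a
   combination of the [u^(2a+1) h^(n+d-a)] and [J_{2n+1,2d+1}] as one of the
   [u^(m(2e+3)) h^(n+d-e)]. On the curve [u^2 + u^(2m) = h] the monomials
   [u^(p+2a+2me) h^(N-a-e)] satisfy a Pascal recursion in [(a, e)], which trades them for the
   powers of [u] and [h] that appear in (ii). *)

Lemma sumR_ext (f g : nat -> R) a b :
  (forall i, (a <= i <= b)%nat -> f i = g i) -> sumR f a b = sumR g a b.
Proof.
  intros E. unfold sumR. f_equal. apply map_ext_in.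
  intros i Hi. apply in_seq in Hi. apply E. lia.
Qed.

Lemma sumR_plus (f g : nat -> R) a b :
  sumR (fun i => f i + g i) a b = sumR f a b + sumR g a b.
Proof. unfold sumR. induction (seq a (S b - a)); simpl; [ring | rewrite IHl; ring]. Qed.

Lemma sumR_scal k (f : nat -> R) a b : sumR (fun i => k * f i) a b = k * sumR f a b.
Proof. unfold sumR. induction (seq a (S b - a)); simpl; [ring | rewrite IHl; ring]. Qed.

Lemma sumR_zero (f : nat -> R) a b :
  (forall i, (a <= i <= b)%nat -> f i = 0) -> sumR f a b = 0.
Proof.
  intros E. rewrite (sumR_ext f (fun i => 0 * f i)) by (intros i Hi; rewrite E; [ring | lia]).
  rewrite sumR_scal. ring.
Qed.

Lemma sumR_last (f : nat -> R) a b :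
  (a <= S b)%nat -> sumR f a (S b) = sumR f a b + f (S b).
Proof.
  intros Hab. unfold sumR.
  replace (S (S b) - a)%nat with (S (S b - a)) by lia.
  rewrite seq_S, map_app, fold_right_app. replace (a + (S b - a))%nat with (S b) by lia.
  cbn [fold_right map]. rewrite Rplus_0_r.
  induction (map f (seq a (S b - a))) as [|x l IH]; simpl; [ring | rewrite IH; ring].
Qed.

Lemma sumR_single (f : nat -> R) a b j : (a <= j <= b)%nat ->
  (forall i, (a <= i <= b)%nat -> i <> j -> f i = 0) -> sumR f a b = f j.
Proof.
  revert j. induction b as [|b IH]; intros j Hj E.
  - replace a with 0%nat in * by lia. replace j with 0%nat by lia.
    unfold sumR. simpl. ring.
  - rewrite sumR_last by lia. destruct (Nat.eq_dec j (S b)) as [->|Hne].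
    + rewrite sumR_zero; [ring | intros i Hi; apply E; lia].
    + rewrite (IH j), (E (S b)); [ring | lia | lia | lia | intros i Hi; apply E; lia].
Qed.

Definition unit_coef (j : nat) : nat -> R := fun i => if Nat.eqb i j then 1 else 0.

Lemma unit_coef_eq j : unit_coef j j = 1.
Proof. unfold unit_coef. now rewrite Nat.eqb_refl. Qed.

Lemma unit_coef_neq j i : i <> j -> unit_coef j i = 0.
Proof. intros H. unfold unit_coef. now rewrite (proj2 (Nat.eqb_neq i j) H). Qed.

Lemma sumR_unit_coef (f : nat -> R) a b j : (a <= j <= b)%nat ->
  sumR (fun i => unit_coef j i * f i) a b = f j.
Proof.
  intros Hj. rewrite (sumR_single _ a b j Hj).
  - now rewrite unit_coef_eq, Rmult_1_l.
  - intros i _ Hi. rewrite unit_coef_neq by exact Hi. ring.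
Qed.

Lemma sumR_unit_coef_out (f : nat -> R) a b j : (j < a \/ b < j)%nat ->
  sumR (fun i => unit_coef j i * f i) a b = 0.
Proof. intros Hj. apply sumR_zero. intros i Hi. rewrite unit_coef_neq by lia. ring. Qed.

Section Span.

Context {T : Type} (g : nat -> T -> R).

Definition in_span (N : nat) (f : T -> R) : Prop :=
  exists c : nat -> R, forall x, f x = sumR (fun i => c i * g i x) 0 N.

Lemma in_span_top N k (f : T -> R) : (forall x, f x = k * g N x) -> in_span N f.
Proof.
  intros E. exists (fun i => k * unit_coef N i). intros x.
  rewrite E, (sumR_ext _ (fun i => k * (unit_coef N i * g i x))) by (intros; ring).
  rewrite sumR_scal, sumR_unit_coef by lia. reflexivity.
Qed.

Lemma in_span_S N f : in_span N f -> in_span (S N) f.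
Proof.
  intros [c Hc]. exists (fun i => if Nat.leb i N then c i else 0). intros x.
  rewrite sumR_last, Hc by lia.
  rewrite (proj2 (Nat.leb_gt (S N) N)), Rmult_0_l, Rplus_0_r by lia.
  apply sumR_ext. intros i Hi. now rewrite (proj2 (Nat.leb_le i N)) by lia.
Qed.

Lemma in_span_diff N (f f1 f2 : T -> R) : in_span N f1 -> in_span N f2 ->
  (forall x, f x = f1 x - f2 x) -> in_span N f.
Proof.
  intros [c1 H1] [c2 H2] E. exists (fun i => c1 i - c2 i). intros x.
  rewrite (sumR_ext _ (fun i => c1 i * g i x + -1 * (c2 i * g i x))) by (intros; ring).
  rewrite sumR_plus, sumR_scal, E, H1, H2. ring.
Qed.

End Span.

Section LinearClasses.

Variable P : R -> R -> Prop.

Record lin_class (C : (R -> R -> R) -> Prop) : Prop := {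
  lin_class_ext : forall f g, C f -> (forall h u, P h u -> f h u = g h u) -> C g;
  lin_classD : forall f g, C f -> C g -> C (fun h u => f h u + g h u);
  lin_classZ : forall k f, C f -> C (fun h u => k * f h u) }.

Variable C : (R -> R -> R) -> Prop.
Hypothesis HC : lin_class C.

Lemma lin_class_diff f f1 f2 : C f1 -> C f2 ->
  (forall h u, P h u -> f h u = f1 h u - f2 h u) -> C f.
Proof.
  intros H1 H2 E.
  apply (lin_class_ext _ HC _ _ (lin_classD _ HC _ _ H1 (lin_classZ _ HC (-1) _ H2))).
  intros h u Hp. rewrite E by exact Hp. ring.
Qed.

Lemma lin_class_sum (g : nat -> R -> R -> R) (c : nat -> R) N :
  (forall i, (i <= N)%nat -> C (g i)) -> C (fun h u => sumR (fun i => c i * g i h u) 0 N).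
Proof.
  induction N as [|N IH]; intros Hg.
  - apply (lin_class_ext _ HC _ _ (lin_classZ _ HC (c 0%nat) _ (Hg 0%nat (le_n 0)))).
    intros h u _. unfold sumR. simpl. ring.
  - apply (lin_class_ext _ HC _ _ (lin_classD _ HC _ _ (IH (fun i Hi => Hg i (le_S _ _ Hi)))
      (lin_classZ _ HC (c (S N)) _ (Hg (S N) (le_n _))))).
    intros h u _. rewrite sumR_last by lia. reflexivity.
Qed.

Lemma lin_class_pascal (M : nat -> nat -> R -> R -> R) A N :
  (forall x y h u, (x + y < N)%nat -> P h u -> M x y h u = M (S x) y h u + M x (S y) h u) ->
  (forall x, (x < A)%nat -> (x <= N)%nat -> C (M x 0%nat)) ->
  (forall y, (A + y <= N)%nat -> C (M A y)) ->
  forall y x, (x <= A)%nat -> (x + y <= N)%nat -> C (M x y).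
Proof.
  intros Hrel Hrow Hcol y. induction y as [|y IH]; intros x Hx HxN;
    (destruct (Nat.eq_dec x A) as [->|Hne]; [apply Hcol; lia|]).
  - apply Hrow; lia.
  - apply (lin_class_diff _ _ _ (IH x ltac:(lia) ltac:(lia)) (IH (S x) ltac:(lia) ltac:(lia))).
    intros h u Hp. rewrite (Hrel x y h u) by (lia || exact Hp). ring.
Qed.

Section BlockSpan.

Variables (X : R -> R -> R) (A B : nat -> R -> R -> R) (d s n : nat).

Definition block_sum (c : nat -> R) (h u : R) : R :=
  c 0%nat * X h u + sumR (fun i => c i * A i h u) 1 d
  + sumR (fun i => c (i + d)%nat * B i h u) s n.

Definition block_span (f : R -> R -> R) : Prop :=
  exists c : nat -> R, forall h u, P h u -> f h u = block_sum c h u.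

Lemma block_span_lin_class : lin_class block_span.
Proof.
  split.
  - intros f g [c Hc] E. exists c. intros h u Hp. rewrite <- E by exact Hp. auto.
  - intros f g [c Hc] [c' Hc']. exists (fun i => c i + c' i). intros h u Hp.
    rewrite Hc, Hc' by exact Hp. unfold block_sum.
    rewrite (sumR_ext (fun i => (c i + c' i) * A i h u) (fun i => c i * A i h u + c' i * A i h u))
      by (intros; ring).
    rewrite (sumR_ext (fun i => (c (i + d)%nat + c' (i + d)%nat) * B i h u)
      (fun i => c (i + d)%nat * B i h u + c' (i + d)%nat * B i h u)) by (intros; ring).
    rewrite !sumR_plus. ring.
  - intros k f [c Hc]. exists (fun i => k * c i). intros h u Hp.
    rewrite Hc by exact Hp. unfold block_sum.
    rewrite (sumR_ext (fun i => k * c i * A i h u) (fun i => k * (c i * A i h u)))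
      by (intros; ring).
    rewrite (sumR_ext (fun i => k * c (i + d)%nat * B i h u)
      (fun i => k * (c (i + d)%nat * B i h u))) by (intros; ring).
    rewrite !sumR_scal. ring.
Qed.

Hypothesis s_pos : (1 <= s)%nat.

Lemma block_span_X : block_span X.
Proof.
  exists (unit_coef 0). intros h u _. unfold block_sum.
  rewrite unit_coef_eq, sumR_unit_coef_out by lia.
  rewrite sumR_zero; [ring | intros i Hi; rewrite unit_coef_neq by lia; ring].
Qed.

Lemma block_span_A i : (1 <= i <= d)%nat -> block_span (A i).
Proof.
  intros Hi. exists (unit_coef i). intros h u _. unfold block_sum.
  rewrite unit_coef_neq, sumR_unit_coef by lia.
  rewrite sumR_zero; [ring | intros j Hj; rewrite unit_coef_neq by lia; ring].
Qed.

Lemma block_span_B i : (s <= i <= n)%nat -> block_span (B i).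
Proof.
  intros Hi. exists (unit_coef (i + d)). intros h u _. unfold block_sum.
  rewrite unit_coef_neq, sumR_unit_coef_out by lia.
  rewrite (sumR_single _ s n i Hi), unit_coef_eq; [ring |].
  intros j _ Hj. rewrite unit_coef_neq by lia. ring.
Qed.

End BlockSpan.

End LinearClasses.

Definition cossin (p q : nat) (t : R) : R := cos t ^ p * sin t ^ q.

Lemma continuous_cossin p q t : continuous (cossin p q) t.
Proof.
  apply (ex_derive_continuous (K := R_AbsRing) (V := R_NormedModule)).
  unfold cossin. auto_derive. auto.
Qed.

Lemma ex_RInt_cossin p q x y : ex_RInt (cossin p q) x y.
Proof.
  apply (ex_RInt_continuous (V := R_CompleteNormedModule)).
  intros; apply continuous_cossin.
Qed.

Lemma RInt_cossin_scal (f : R -> R) k p q x y :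
  (forall t, f t = k * cossin p q t) -> RInt f x y = k * RInt (cossin p q) x y.
Proof.
  intros E. rewrite (RInt_ext _ (fun t => k * cossin p q t)) by (intros; apply E).
  apply (RInt_scal (V := R_CompleteNormedModule)), ex_RInt_cossin.
Qed.

Lemma RInt_cossin_split p q x y :
  RInt (cossin p q) x y = RInt (cossin (S (S p)) q) x y + RInt (cossin p (S (S q))) x y.
Proof.
  rewrite <- (RInt_plus (V := R_CompleteNormedModule)) by apply ex_RInt_cossin.
  apply RInt_ext. intros t _. unfold cossin, plus. simpl.
  pose proof (sin2_cos2 t) as E. unfold Rsqr in E.
  transitivity (cos t ^ p * sin t ^ q * (sin t * sin t + cos t * cos t)); [rewrite E |]; ring.
Qed.

Lemma RInt_cossin_shift p q x y v : cos v = -1 -> sin v = 0 ->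
  RInt (cossin p q) (x + v) (y + v) = (-1) ^ (p + q) * RInt (cossin p q) x y.
Proof.
  intros Hc Hs.
  pose proof (RInt_comp_lin (V := R_CompleteNormedModule) (cossin p q) 1 v x y
    (ex_RInt_cossin _ _ _ _)) as E.
  rewrite !Rmult_1_l in E. rewrite <- E.
  apply RInt_cossin_scal. intros t. unfold scal; simpl; unfold mult; simpl.
  unfold cossin. rewrite !Rmult_1_l, cos_plus, sin_plus, Hc, Hs, pow_add.
  replace (cos t * -1 - sin t * 0) with (-1 * cos t) by ring.
  replace (sin t * -1 + cos t * 0) with (-1 * sin t) by ring.
  rewrite !Rpow_mult_distr. ring.
Qed.

Lemma RInt_cossin_sin1 p x y :
  RInt (cossin p 1) x y = (cos x ^ S p - cos y ^ S p) / INR (S p).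
Proof.
  assert (Hp : INR (S p) <> 0) by (apply not_0_INR; lia).
  apply is_RInt_unique.
  set (G := fun t => - / INR (S p) * cos t ^ S p).
  replace ((cos x ^ S p - cos y ^ S p) / INR (S p)) with (minus (G y) (G x))
    by (unfold G, minus, plus, opp; simpl; field; exact Hp).
  apply (is_RInt_derive (V := R_CompleteNormedModule)); [| intros; apply continuous_cossin].
  intros t _. unfold G.
  replace (cossin p 1 t) with (- / INR (S p) * (INR (S p) * - sin t * cos t ^ p))
    by (unfold cossin; field; exact Hp).
  apply is_derive_scal, (is_derive_pow cos (S p)), is_derive_cos.
Qed.

Lemma RInt_cossin_cos1 q x y :
  RInt (cossin 1 q) x y = (sin y ^ S q - sin x ^ S q) / INR (S q).
Proof.
  assert (Hq : INR (S q) <> 0) by (apply not_0_INR; lia).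
  apply is_RInt_unique.
  set (G := fun t => / INR (S q) * sin t ^ S q).
  replace ((sin y ^ S q - sin x ^ S q) / INR (S q)) with (minus (G y) (G x))
    by (unfold G, minus, plus, opp; simpl; field; exact Hq).
  apply (is_RInt_derive (V := R_CompleteNormedModule)); [| intros; apply continuous_cossin].
  intros t _. unfold G.
  replace (cossin 1 q t) with (/ INR (S q) * (INR (S q) * cos t * sin t ^ q))
    by (unfold cossin; field; exact Hq).
  apply is_derive_scal, (is_derive_pow sin (S q)), is_derive_sin.
Qed.

Lemma RInt_sin2_PI_0 : RInt (cossin 0 2) PI 0 = - PI / 2.
Proof.
  apply is_RInt_unique.
  set (G := fun t => t / 2 - sin t * cos t / 2).
  replace (- PI / 2) with (minus (G 0) (G PI))
    by (unfold G, minus, plus, opp; simpl; rewrite sin_0, sin_PI; field).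
  apply (is_RInt_derive (V := R_CompleteNormedModule)); [| intros; apply continuous_cossin].
  intros t _. unfold G. auto_derive; [exact I |].
  unfold cossin. pose proof (sin2_cos2 t) as E. unfold Rsqr in E. simpl. lra.
Qed.

Definition half_turn (p q : nat) (b : R) : R := RInt (cossin p q) (PI + b) b.

Lemma half_turn_split p q b :
  half_turn p q b = half_turn (S (S p)) q b + half_turn p (S (S q)) b.
Proof. apply RInt_cossin_split. Qed.

Lemma half_turn_sin1 p b : half_turn p 1 b = ((-1) ^ S p - 1) / INR (S p) * cos b ^ S p.
Proof.
  unfold half_turn. rewrite RInt_cossin_sin1, Rplus_comm, neg_cos.
  replace (- cos b) with (-1 * cos b) by ring. rewrite Rpow_mult_distr. field.
  apply not_0_INR; lia.
Qed.

Lemma half_turn_cos1 q b : half_turn 1 q b = (1 - (-1) ^ S q) / INR (S q) * sin b ^ S q.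
Proof.
  unfold half_turn. rewrite RInt_cossin_cos1, Rplus_comm, neg_sin.
  replace (- sin b) with (-1 * sin b) by ring. rewrite Rpow_mult_distr. field.
  apply not_0_INR; lia.
Qed.

Lemma half_turn_odd_odd a c b : half_turn (2 * a + 1) (2 * c + 1) b = 0.
Proof.
  revert c. induction a as [|a IH]; intros c.
  - rewrite half_turn_cos1. replace (S (2 * c + 1)) with (2 * S c)%nat by lia.
    rewrite pow_1_even. field. apply not_0_INR; lia.
  - pose proof (half_turn_split (2 * a + 1) (2 * c + 1) b) as E.
    replace (S (S (2 * a + 1))) with (2 * S a + 1)%nat in E by lia.
    replace (S (S (2 * c + 1))) with (2 * S c + 1)%nat in E by lia.
    rewrite !IH in E. lra.
Qed.

(* When [p + q] is even, [cossin p q] is [PI]-periodic. *)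
Lemma half_turn_even p q b : Nat.Even (p + q) -> half_turn p q b = RInt (cossin p q) PI 0.
Proof.
  intros [j Hj]. unfold half_turn.
  rewrite <- (RInt_Chasles (V := R_CompleteNormedModule) _ (PI + b) PI b) by apply ex_RInt_cossin.
  rewrite <- (RInt_Chasles (V := R_CompleteNormedModule) _ PI 0 b) by apply ex_RInt_cossin.
  replace (PI + b) with (b + PI) by ring. rewrite <- (Rplus_0_l PI) at 2.
  rewrite RInt_cossin_shift, Hj, pow_1_even by (apply cos_PI || apply sin_PI).
  rewrite <- (opp_RInt_swap (V := R_CompleteNormedModule) _ 0 b) by apply ex_RInt_cossin.
  unfold plus, opp. simpl. ring.
Qed.

Lemma half_turn_cos_span n d :
  in_span (fun a b => cos b ^ (2 * a + 1)) (n + d) (half_turn (2 * n) (2 * d + 1)).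
Proof.
  revert n. induction d as [|d IH]; intros n.
  - rewrite Nat.add_0_r. apply (in_span_top _ _ (((-1) ^ S (2 * n) - 1) / INR (S (2 * n)))).
    intros b. rewrite half_turn_sin1, Nat.add_1_r. reflexivity.
  - rewrite Nat.add_succ_r.
    apply (in_span_diff _ _ _ _ _ (in_span_S _ _ _ (IH n)) (IH (S n))).
    intros b. rewrite (half_turn_split (2 * n) (2 * d + 1)).
    replace (S (S (2 * n))) with (2 * S n)%nat by lia.
    replace (S (S (2 * d + 1))) with (2 * S d + 1)%nat by lia. ring.
Qed.

Lemma half_turn_sin_span n d :
  in_span (fun e b => sin b ^ (2 * e + 3)) (n + d) (half_turn (2 * n + 1) (2 * d + 2)).
Proof.
  revert d. induction n as [|n IH]; intros d.
  - apply (in_span_top _ _ ((1 - (-1) ^ S (2 * d + 2)) / INR (S (2 * d + 2)))).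
    intros b. rewrite half_turn_cos1. replace (2 * (0 + d) + 3)%nat with (S (2 * d + 2)) by lia.
    reflexivity.
  - pose proof (IH (S d)) as IHS. rewrite Nat.add_succ_r in IHS.
    apply (in_span_diff _ _ _ _ _ (in_span_S _ _ _ (IH d)) IHS).
    intros b. rewrite (half_turn_split (2 * n + 1) (2 * d + 2)).
    replace (S (S (2 * n + 1))) with (2 * S n + 1)%nat by lia.
    replace (S (S (2 * d + 2))) with (2 * S d + 2)%nat by lia. ring.
Qed.

Definition on_curve (m : nat) (h u : R) : Prop := 0 < h /\ 0 < u /\ u ^ 2 + u ^ (2 * m) = h.

Lemma sqrt_cos_sin_angB m h u : (1 <= m)%nat -> on_curve m h u ->
  sqrt h * cos (angB m u) = u /\ sqrt h * sin (angB m u) = u ^ m.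
Proof.
  intros Hm (Hh & Hu & Hc). unfold angB. rewrite cos_atan, sin_atan.
  set (z := u ^ m / u).
  assert (Hz : 0 < 1 + z²) by (pose proof (Rle_0_sqr z); lra).
  assert (Hs : sqrt h = u * sqrt (1 + z²)).
  { replace h with (u ^ 2 * (1 + z²))
      by (subst h z; unfold Rsqr; rewrite Nat.mul_comm, pow_mult; field; lra).
    rewrite sqrt_mult, sqrt_pow2 by (lra || apply pow_le; lra). reflexivity. }
  pose proof (sqrt_lt_R0 _ Hz).
  rewrite Hs. split; [field | subst z; field]; lra.
Qed.

Lemma sqrt_pow_split h x p a l : 0 <= h -> (a <= l)%nat ->
  sqrt h ^ (2 * l + p) * x ^ (2 * a + p) = (sqrt h * x) ^ (2 * a + p) * h ^ (l - a).
Proof.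
  intros Hh Hal. replace (2 * l + p)%nat with (2 * a + p + 2 * (l - a))%nat by lia.
  rewrite pow_add, pow_mult, pow2_sqrt, Rpow_mult_distr by exact Hh. ring.
Qed.

Lemma line_int_circle h p q a b :
  line_int_dx (fun x y => x ^ p * y ^ q) (circ_x h) (circ_y h) a b
  = - sqrt h ^ (p + q + 1) * RInt (cossin p (q + 1)) a b.
Proof.
  apply RInt_cossin_scal. intros t.
  replace (Derive (circ_x h) t) with (- sqrt h * sin t)
    by (symmetry; apply is_derive_unique; unfold circ_x; auto_derive; [exact I | ring]).
  unfold circ_x, circ_y, cossin. rewrite !Rpow_mult_distr, !pow_add. simpl. ring.
Qed.

Definition curve_mono (m p N a e : nat) : R -> R -> R :=
  fun h u => u ^ (p + 2 * a + 2 * m * e) * h ^ (N - a - e).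

Lemma curve_mono_pascal m p N a e h u : (a + e < N)%nat -> on_curve m h u ->
  curve_mono m p N a e h u = curve_mono m p N (S a) e h u + curve_mono m p N a (S e) h u.
Proof.
  intros Hae (_ & _ & Hc). unfold curve_mono.
  replace (N - a - e)%nat with (S (N - S a - e)) by lia.
  replace (N - a - S e)%nat with (N - S a - e)%nat by lia.
  replace (p + 2 * S a + 2 * m * e)%nat with (p + 2 * a + 2 * m * e + 2)%nat by lia.
  rewrite Nat.mul_succ_r, Nat.add_assoc, !pow_add, <- Hc. simpl. ring.
Qed.

Lemma tau_exponent m l d e : (1 <= m)%nat -> (e < d <= l)%nat ->
  (2 * l + 2 * d * (m - 1) + 1 - 2 * m * (d - e - 1) = 1 + 2 * (l - d) + 2 * m * S e)%nat.
Proof. intros. nia. Qed.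

Lemma mu_exponent m l d e : (1 <= m)%nat -> (e < d <= l)%nat ->
  (2 * l + 2 * d * (m - 1) + m - 2 * m * (d - e - 1) = 3 * m + 2 * (l - d) + 2 * m * e)%nat.
Proof. intros. nia. Qed.

Lemma bounded_choice (P : nat -> (nat -> R) -> Prop) B :
  (forall d, (d <= B)%nat -> exists c, P d c) ->
  exists f : nat -> nat -> R, forall d, (d <= B)%nat -> P d (f d).
Proof.
  intros H. destruct (functional_choice (fun d c => (d <= B)%nat -> P d c)) as [f Hf].
  - intros d. destruct (Nat.le_gt_cases d B) as [Hd | Hd].
    + destruct (H d Hd) as [c Hc]. exists c. auto.
    + exists (fun _ => 0). lia.
  - exists f. exact Hf.
Qed.

Section OddExponent.

Variable k : nat.
Local Notation m := (2 * k + 1)%nat.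

Lemma angA_odd u : u <> 0 -> angA m u = PI + angB m u.
Proof.
  intros Hu. unfold angA, angB. do 2 f_equal.
  replace (- u) with (-1 * u) by ring.
  rewrite Rpow_mult_distr, Nat.add_1_r, pow_1_odd. field. exact Hu.
Qed.

Lemma Jij_half_turn h u p q : u <> 0 ->
  Jij m h u p q = - sqrt h ^ (p + q + 1) * half_turn p (q + 1) (angB m u).
Proof. intros Hu. unfold Jij. rewrite line_int_circle, angA_odd by exact Hu. reflexivity. Qed.

Lemma Iij_Jij h u p q : u <> 0 -> Iij m h u p q = (-1) ^ (p + q + 1) * Jij m h u p q.
Proof.
  intros Hu. unfold Iij. rewrite line_int_circle, Jij_half_turn, angA_odd by exact Hu.
  unfold half_turn. set (b := angB m u).
  replace (PI + b - 2 * PI) with (b + - PI) by ring.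
  replace b with (PI + b + - PI) at 1 by ring.
  rewrite RInt_cossin_shift by (rewrite ?cos_neg, ?sin_neg, ?cos_PI, ?sin_PI; ring).
  replace (p + (q + 1))%nat with (p + q + 1)%nat by lia. ring.
Qed.

Lemma Jij_odd_even h u a c : u <> 0 -> Jij m h u (2 * a + 1) (2 * c) = 0.
Proof. intros Hu. rewrite Jij_half_turn, half_turn_odd_odd by exact Hu. ring. Qed.

Lemma Jij_Iij_symmetry h u : 0 < u -> forall i l s : nat,
  Jij m h u i (2 * s) = - Iij m h u i (2 * s) /\
  Jij m h u (2 * l) (2 * s + 1) = Iij m h u (2 * l) (2 * s + 1) /\
  Jij m h u (2 * l + 1) (2 * s + 1) = - Iij m h u (2 * l + 1) (2 * s + 1).
Proof.
  intros Hu i l s. assert (Hu0 : u <> 0) by lra. rewrite !Iij_Jij by exact Hu0.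
  split; [| split].
  - destruct (Nat.Even_or_Odd i) as [[a ->] | [a ->]].
    + replace (2 * a + 2 * s + 1)%nat with (S (2 * (a + s)))%nat by lia.
      rewrite pow_1_odd. ring.
    + rewrite Jij_odd_even by exact Hu0. ring.
  - replace (2 * l + (2 * s + 1) + 1)%nat with (2 * (l + s + 1))%nat by lia.
    rewrite pow_1_even. ring.
  - replace (2 * l + 1 + (2 * s + 1) + 1)%nat with (S (2 * (l + s + 1)))%nat by lia.
    rewrite pow_1_odd. ring.
Qed.

Lemma Jij_even_odd h u l d : 0 < h -> u <> 0 -> (d <= l)%nat ->
  Jij m h u (2 * l - 2 * d) (2 * d + 1)
  = RInt (cossin (2 * l - 2 * d) (2 * d + 1 + 1)) PI 0 / RInt (cossin 0 2) PI 0
    * h ^ l * Jij m h u 0 1.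
Proof.
  intros Hh Hu Hd. rewrite !Jij_half_turn by exact Hu.
  rewrite (half_turn_even (2 * l - 2 * d) (2 * d + 1 + 1)) by (exists (l + 1)%nat; lia).
  rewrite (half_turn_even 0 (1 + 1)) by (exists 1%nat; reflexivity).
  replace (2 * l - 2 * d + (2 * d + 1) + 1)%nat with (2 * l + 2)%nat by lia.
  change (0 + 1 + 1)%nat with 2%nat. change (1 + 1)%nat with 2%nat.
  rewrite pow_add, pow_mult, !pow2_sqrt, RInt_sin2_PI_0 by lra.
  field. pose proof PI_RGT_0. lra.
Qed.

Lemma Jij_0_0 h u : on_curve m h u -> Jij m h u 0 0 = 2 * u.
Proof.
  intros Hp. destruct (sqrt_cos_sin_angB m h u ltac:(lia) Hp) as [Hcos _].
  rewrite Jij_half_turn, half_turn_sin1 by (destruct Hp; lra).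
  set (b := angB m u) in *. simpl. rewrite <- Hcos. field.
Qed.

Lemma Jij_1_1 h u : on_curve m h u -> Jij m h u 1 1 = - 2 / 3 * u ^ (3 * m).
Proof.
  intros Hp. destruct (sqrt_cos_sin_angB m h u ltac:(lia) Hp) as [_ Hsin].
  rewrite Jij_half_turn, half_turn_cos1 by (destruct Hp; lra).
  rewrite (Nat.mul_comm 3 m), pow_mult, <- Hsin. set (b := angB m u). simpl. field.
Qed.

Lemma Jij_even_even_curve n d : exists c : nat -> R, forall h u, on_curve m h u ->
  Jij m h u (2 * n) (2 * d) = sumR (fun a => c a * curve_mono m 1 (n + d) a 0 h u) 0 (n + d).
Proof.
  destruct (half_turn_cos_span n d) as [c Hc]. exists (fun a => - c a). intros h u Hp.
  destruct (sqrt_cos_sin_angB m h u ltac:(lia) Hp) as [Hcos _].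
  rewrite Jij_half_turn, Hc by (destruct Hp; lra).
  replace (2 * n + 2 * d + 1)%nat with (2 * (n + d) + 1)%nat by lia.
  rewrite <- sumR_scal. apply sumR_ext. intros a Ha. unfold curve_mono.
  rewrite Nat.mul_0_r, Nat.add_0_r, Nat.sub_0_r.
  replace (1 + 2 * a)%nat with (2 * a + 1)%nat by lia.
  transitivity (- c a * (sqrt h ^ (2 * (n + d) + 1) * cos (angB m u) ^ (2 * a + 1))); [ring |].
  rewrite sqrt_pow_split, Hcos by (destruct Hp; lra || lia). reflexivity.
Qed.

Lemma Jij_odd_odd_curve n d : exists c : nat -> R, forall h u, on_curve m h u ->
  Jij m h u (2 * n + 1) (2 * d + 1)
  = sumR (fun e => c e * curve_mono m (3 * m) (n + d) 0 e h u) 0 (n + d).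
Proof.
  destruct (half_turn_sin_span n d) as [c Hc]. exists (fun e => - c e). intros h u Hp.
  destruct (sqrt_cos_sin_angB m h u ltac:(lia) Hp) as [_ Hsin].
  rewrite Jij_half_turn by (destruct Hp; lra).
  replace (2 * n + 1 + (2 * d + 1) + 1)%nat with (2 * (n + d) + 3)%nat by lia.
  replace (2 * d + 1 + 1)%nat with (2 * d + 2)%nat by lia.
  rewrite Hc, <- sumR_scal. apply sumR_ext. intros e He. unfold curve_mono.
  transitivity (- c e * (sqrt h ^ (2 * (n + d) + 3) * sin (angB m u) ^ (2 * e + 3))); [ring |].
  rewrite sqrt_pow_split, Hsin, <- pow_mult, Nat.sub_0_r by (destruct Hp; lra || lia).
  do 3 f_equal. ring.
Qed.

Definition tau_span (l d : nat) : (R -> R -> R) -> Prop :=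
  block_span (on_curve m) (fun h u => h ^ l * Jij m h u 0 0)
    (fun i h u => h ^ (i - 1) * u ^ (2 * l + 2 * d * (m - 1) + 1 - 2 * m * (i - 1)))
    (fun i h u => h ^ (l - i) * u ^ (2 * m + 1 + 2 * (i - 1))) d 1 (l - d).

Lemma tau_span_lin_class l d : lin_class (on_curve m) (tau_span l d).
Proof. apply block_span_lin_class. Qed.

Lemma tau_span_low_monomials l d a : (a <= l - d)%nat -> tau_span l d (curve_mono m 1 l a 0).
Proof.
  intros Ha. pose proof (tau_span_lin_class l d) as HC.
  refine (lin_class_pascal _ _ HC (fun x y => curve_mono m 1 l y x) 1 (l - d) _ _ _ a 0 _ _);
    try lia.
  - intros x y h u Hxy Hp. rewrite (curve_mono_pascal _ _ _ y x) by (lia || exact Hp). ring.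
  - intros x Hx _. replace x with 0%nat by lia.
    apply (lin_class_ext _ _ HC _ _
      (lin_classZ _ _ HC (/ 2) _ (block_span_X _ _ _ _ _ _ _ (le_n 1)))).
    intros h u Hp. rewrite Jij_0_0 by exact Hp. unfold curve_mono.
    rewrite !Nat.mul_0_r, !Nat.sub_0_r. simpl. field.
  - intros y Hy.
    eapply (lin_class_ext _ _ HC); [apply (block_span_B _ _ _ _ _ _ _ (le_n 1) (S y)); lia |].
    intros h u _. unfold curve_mono. rewrite Rmult_comm. do 2 f_equal; lia.
Qed.

(* Past [a = l - d] the recursion runs from the column [a = l - d], whose entries with
   [e >= 1] are the terms [h ^ (i - 1) * u ^ _] of the statement. *)
Lemma tau_span_monomials l d a : (d <= l)%nat -> (a <= l)%nat ->
  tau_span l d (curve_mono m 1 l a 0).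
Proof.
  intros Hd Ha. pose proof (tau_span_lin_class l d) as HC.
  assert (Hcol : forall e, (e <= d)%nat -> tau_span l d (curve_mono m 1 l (l - d) e)).
  { intros [|e] He; [apply tau_span_low_monomials; lia |].
    eapply (lin_class_ext _ _ HC); [apply (block_span_A _ _ _ _ _ _ _ (le_n 1) (d - e)); lia |].
    intros h u _. unfold curve_mono. rewrite Rmult_comm, tau_exponent by lia.
    f_equal. f_equal. lia. }
  destruct (Nat.le_gt_cases a (l - d)) as [Ha' | Ha']; [exact (tau_span_low_monomials l d a Ha') |].
  replace a with (l - d + (a - (l - d)))%nat by lia.
  refine (lin_class_pascal _ _ HC (fun x y => curve_mono m 1 l (l - d + y) x) d d
    _ _ _ (a - (l - d)) 0 _ _); try lia.
  - intros x y h u Hxy Hp. cbv beta. rewrite (Nat.add_succ_r (l - d) y).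
    rewrite (curve_mono_pascal _ _ _ (l - d + y) x) by (lia || exact Hp). ring.
  - intros x Hx _. rewrite Nat.add_0_r. apply Hcol. lia.
  - intros y Hy. replace y with 0%nat by lia. rewrite Nat.add_0_r. apply Hcol. lia.
Qed.

Definition mu_span (l d : nat) : (R -> R -> R) -> Prop :=
  block_span (on_curve m) (fun h u => h ^ (l - 1) * Jij m h u 1 1)
    (fun i h u => h ^ (i - 1) * u ^ (2 * l + 2 * d * (m - 1) + m - 2 * m * (i - 1)))
    (fun i h u => h ^ (l - i) * u ^ (3 * m + 2 + 2 * (i - 2))) d 2 (l - d).

Lemma mu_span_lin_class l d : lin_class (on_curve m) (mu_span l d).
Proof. apply block_span_lin_class. Qed.

Lemma mu_span_monomials l d e : (1 <= l)%nat -> (d <= l - 1)%nat -> (e <= l - 1)%nat ->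
  mu_span l d (curve_mono m (3 * m) (l - 1) 0 e).
Proof.
  intros Hl Hd He. pose proof (mu_span_lin_class l d) as HC.
  refine (lin_class_pascal _ _ HC (curve_mono m (3 * m) (l - 1)) (l - d) (l - 1)
    _ _ _ e 0 _ _); try lia.
  - intros x y h u Hxy Hp. apply curve_mono_pascal; assumption.
  - intros [|x] Hx _.
    + apply (lin_class_ext _ _ HC _ _
        (lin_classZ _ _ HC (- 3 / 2) _ (block_span_X _ _ _ _ _ _ _ (le_S _ _ (le_n 1))))).
      intros h u Hp. rewrite Jij_1_1 by exact Hp. unfold curve_mono.
      rewrite !Nat.mul_0_r, !Nat.add_0_r, !Nat.sub_0_r. field.
    + eapply (lin_class_ext _ _ HC);
        [apply (block_span_B _ _ _ _ _ _ _ (le_S _ _ (le_n 1)) (S (S x))); lia |].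
      intros h u _. unfold curve_mono. rewrite Rmult_comm. do 2 f_equal; lia.
  - intros y Hy.
    eapply (lin_class_ext _ _ HC);
      [apply (block_span_A _ _ _ _ _ _ _ (le_S _ _ (le_n 1)) (d - y)); lia |].
    intros h u _. unfold curve_mono. rewrite Rmult_comm, mu_exponent by lia. f_equal. f_equal. lia.
Qed.

Lemma tau_expansion l d : (d <= l)%nat -> exists c : nat -> R,
  forall h u, on_curve m h u ->
    Jij m h u (2 * l - 2 * d) (2 * d) =
      c 0%nat * h ^ l * Jij m h u 0 0
      + sumR (fun i => c i * h ^ (i - 1)
                 * u ^ (2 * l + 2 * d * (m - 1) + 1 - 2 * m * (i - 1))) 1 d
      + sumR (fun i => c (i + d)%nat * h ^ (l - i)
                 * u ^ (2 * m + 1 + 2 * (i - 1))) 1 (l - d).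
Proof.
  intros Hd.
  assert (HJ : tau_span l d (fun h u => Jij m h u (2 * l - 2 * d) (2 * d))).
  { destruct (Jij_even_even_curve (l - d) d) as [c Hc].
    replace (l - d + d)%nat with l in Hc by lia.
    pose proof (tau_span_lin_class l d) as HC.
    apply (lin_class_ext _ _ HC _ _ (lin_class_sum _ _ HC _ c l
      (fun a Ha => tau_span_monomials l d a Hd Ha))).
    intros h u Hp. replace (2 * l - 2 * d)%nat with (2 * (l - d))%nat by lia.
    symmetry. apply Hc, Hp. }
  destruct HJ as [c Hc]. exists c. intros h u Hp. rewrite Hc by exact Hp.
  unfold block_sum. rewrite Rmult_assoc.
  f_equal; [f_equal |]; apply sumR_ext; intros; ring.
Qed.

Lemma mu_expansion l : (1 <= l)%nat -> forall d, (d <= l - 1)%nat -> exists c : nat -> R,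
  forall h u, on_curve m h u ->
    Jij m h u (2 * l - 2 * d - 1) (2 * d + 1) =
      c 0%nat * h ^ (l - 1) * Jij m h u 1 1
      + sumR (fun i => c i * h ^ (i - 1)
                 * u ^ (2 * l + 2 * d * (m - 1) + m - 2 * m * (i - 1))) 1 d
      + sumR (fun i => c (i + d)%nat * h ^ (l - i)
                 * u ^ (3 * m + 2 + 2 * (i - 2))) 2 (l - d).
Proof.
  intros Hl d Hd.
  assert (HJ : mu_span l d (fun h u => Jij m h u (2 * l - 2 * d - 1) (2 * d + 1))).
  { destruct (Jij_odd_odd_curve (l - 1 - d) d) as [c Hc].
    replace (l - 1 - d + d)%nat with (l - 1)%nat in Hc by lia.
    pose proof (mu_span_lin_class l d) as HC.
    apply (lin_class_ext _ _ HC _ _ (lin_class_sum _ _ HC _ c (l - 1)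
      (fun e He => mu_span_monomials l d e Hl Hd He))).
    intros h u Hp. replace (2 * l - 2 * d - 1)%nat with (2 * (l - 1 - d) + 1)%nat by lia.
    symmetry. apply Hc, Hp. }
  destruct HJ as [c Hc]. exists c. intros h u Hp. rewrite Hc by exact Hp.
  unfold block_sum. rewrite Rmult_assoc.
  f_equal; [f_equal |]; apply sumR_ext; intros; ring.
Qed.

End OddExponent.

Theorem lemma3p3 (k : nat) :
  let m := (2 * k + 1)%nat in
  (* (i) *)
  (forall (h u : R), 0 < h -> 0 < u -> u ^ 2 + u ^ (2 * m) = h ->
     forall i l s : nat,
       Jij m h u i (2 * s) = - Iij m h u i (2 * s) /\
       Jij m h u (2 * l) (2 * s + 1) = Iij m h u (2 * l) (2 * s + 1) /\
       Jij m h u (2 * l + 1) (2 * s + 1) = - Iij m h u (2 * l + 1) (2 * s + 1))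
  /\
  (* (ii) *)
  (forall l : nat, (1 <= l)%nat ->
     exists tau mu : nat -> nat -> R,   (* tau d i = tau^i_{l,d}, mu d i = mu^i_{l,d} *)
       forall (h u : R), 0 < h -> 0 < u -> u ^ 2 + u ^ (2 * m) = h ->
         (forall d : nat, (d <= l)%nat ->
            Jij m h u (2 * l - 2 * d) (2 * d) =
              tau d 0%nat * h ^ l * Jij m h u 0 0
              + sumR (fun i => tau d i * h ^ (i - 1)
                         * u ^ (2 * l + 2 * d * (m - 1) + 1 - 2 * m * (i - 1))) 1 d
              + sumR (fun i => tau d (i + d)%nat * h ^ (l - i)
                         * u ^ (2 * m + 1 + 2 * (i - 1))) 1 (l - d))
         /\
         (forall d : nat, (d <= l - 1)%nat ->
            Jij m h u (2 * l - 2 * d - 1) (2 * d + 1) =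
              mu d 0%nat * h ^ (l - 1) * Jij m h u 1 1
              + sumR (fun i => mu d i * h ^ (i - 1)
                         * u ^ (2 * l + 2 * d * (m - 1) + m - 2 * m * (i - 1))) 1 d
              + sumR (fun i => mu d (i + d)%nat * h ^ (l - i)
                         * u ^ (3 * m + 2 + 2 * (i - 2))) 2 (l - d)))
  /\
  (* (iii) *)
  (forall l : nat,
     exists chi : nat -> R,   (* chi d = chi_{l,d} *)
       forall (h u : R), 0 < h -> 0 < u -> u ^ 2 + u ^ (2 * m) = h ->
         forall d : nat, (d <= l)%nat ->
           Jij m h u (2 * l + 1 - 2 * d) (2 * d) = 0 /\
           Jij m h u (2 * l - 2 * d) (2 * d + 1) = chi d * h ^ l * Jij m h u 0 1).
Proof.
  intros m. split; [| split].
  - intros h u _ Hu _. exact (Jij_Iij_symmetry k h u Hu).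
  - intros l Hl.
    destruct (bounded_choice _ l (tau_expansion k l)) as [tau Htau].
    destruct (bounded_choice _ (l - 1) (mu_expansion k l Hl)) as [mu Hmu].
    exists tau, mu. intros h u Hh Hu Hc.
    split; intros d Hd; [apply Htau | apply Hmu]; first [exact Hd | repeat split; assumption].
  - intros l.
    exists (fun d => RInt (cossin (2 * l - 2 * d) (2 * d + 1 + 1)) PI 0 / RInt (cossin 0 2) PI 0).
    intros h u Hh Hu _ d Hd. split.
    + replace (2 * l + 1 - 2 * d)%nat with (2 * (l - d) + 1)%nat by lia.
      apply Jij_odd_even. lra.
    + apply Jij_even_odd; [lra | lra | exact Hd].
Qed.
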